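(* Let $n\ge2$, $0<\eta\le\frac14$, and let $A$ be a real symmetric non-negative $n\times n$ matrix with $\det(A)\ge(1-\sqrt\eta)^2$ and $\operatorname{tr}(A)\le n(1+\eta)^{2/n}$. Then $$\|A-\mathrm{Id}\|^2\le4(n-1)^2\sqrt\eta\left(1+\frac{n+10}n\sqrt\eta\right).$$
   Context: $\|\cdot\|$ denotes the Hilbert–Schmidt (Frobenius) norm, $\|B\|^2=\operatorname{tr}(B^tB)$. *)

From HB Require Import structures.
From mathcomp Require Import all_boot all_order all_algebra.
Set Implicit Arguments. Unset Strict Implicit. Unset Printing Implicit Defensive.
Import Order.TTheory GRing.Theory Num.Theory.
Local Open Scope ring_scope.

Definition symmetric_mx (R : rcfType) (n : nat) (A : 'M[R]_n) : Prop := A^T = A.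

(* non-negative (positive semidefinite) matrix: v A v^T >= 0 for all v *)
Definition psd_mx (R : rcfType) (n : nat) (A : 'M[R]_n) : Prop :=
  forall v : 'rV[R]_n, 0 <= (v *m A *m v^T) 0 0.

Definition hs_norm2 (R : rcfType) (n : nat) (B : 'M[R]_n) : R := \tr (B^T *m B).

From HB Require Import structures.
From mathcomp Require Import all_boot all_order all_algebra.
From mathcomp Require Import complex.
From mathcomp Require Import ring lra.
Local Open Scope ring_scope.
Import Order.TTheory GRing.Theory Num.Theory.

(* Write s = sqrt eta.  The statement is reduced to its eigenvalues
   l_1, ..., l_n >= 0 (spectral theorem, through the hermitian complexification
   of A): with S = sum l_i and Q = sum l_i^2 we have ||A - 1||^2 = Q - 2S + n,
   prod l_i >= (1 - s)^2 and S <= n r with r^n = (1 + s^2)^2.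
   - Maclaurin's inequality (AM-GM over the n(n-1) ordered pairs i <> j)
     bounds the pair sum S^2 - Q from below by n(n-1)(1 - 2u) with
     u = (2s + 8s^2)/n, because (1 - u)^n <= (1 - s)^2 by Bernoulli.
   - Bernoulli's inequality at the root r gives n <= n r <= n + 2s^2 + s^4,
     so S^2 - 2S <= (n r)^2 - 2 n r is controlled by the trace defect.
   - Combining, Q - 2S + n is bounded by an explicit polynomial in s and
     m = n - 1, which is compared with the target by elementary estimates. *)

Lemma bernoulli_ineq (R : realDomainType) (x : R) (n : nat) :
  0 <= x -> 1 + n%:R * x <= (1 + x) ^+ n.
Proof.
move=> x0; elim: n => [|n IH]; first by rewrite mul0r addr0 expr0.
rewrite exprS -natr1.
have n0 : 0 <= n%:R :> R by [].
set y := (1 + x) ^+ n in IH *; nra.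
Qed.

Section OffDiagonalPairs.
Variables (R : realFieldType) (n : nat) (l : 'I_n -> R).

Let offdiag := [pred p : 'I_n * 'I_n | p.1 != p.2].

Lemma sum_offdiag_products :
  \sum_(p in offdiag) l p.1 * l p.2 = (\sum_i l i) ^+ 2 - \sum_i l i ^+ 2.
Proof.
apply/esym; rewrite -(pair_big_dep xpredT (fun i j => i != j) (fun i j => l i * l j)) /=.
rewrite expr2 big_distrlr /= -sumrB; apply: eq_bigr => i _.
rewrite (bigD1 i) //= expr2 addrC addrK.
by apply: eq_bigl => j; rewrite eq_sym.
Qed.

Lemma card_offdiag : #|offdiag| = (n * n.-1)%N.
Proof.
rewrite -sum1_card -(pair_big_dep xpredT (fun i j => i != j) (fun _ _ => 1%N)) /=.
rewrite (eq_bigr (fun _ => n.-1)) ?sum_nat_const ?card_ord // => i _.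
rewrite sum1_card; have := cardC1 i; rewrite card_ord => <-.
by apply: eq_card => j; rewrite !inE eq_sym.
Qed.

(* Each index occurs 2(n-1) times among the off-diagonal pairs. *)
Lemma prod_offdiag_products :
  \prod_(p in offdiag) (l p.1 * l p.2) = (\prod_i l i) ^+ (2 * n.-1).
Proof.
rewrite -(pair_big_dep xpredT (fun i j => i != j) (fun i j => l i * l j)) /=.
have others (x : R) (i : 'I_n) : \prod_(j | j != i) x = x ^+ n.-1.
  rewrite prodr_const; have := cardC1 i; rewrite card_ord => <-.
  by congr (_ ^+ _); apply: eq_card => j; rewrite !inE.
rewrite (eq_bigr (fun i => l i ^+ n.-1 * \prod_(j | i != j) l j)) => [|i _]; last first.
  by rewrite big_split /= -(others _ i); congr (_ * _); apply: eq_bigl => j; rewrite eq_sym.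
rewrite big_split /= (exchange_big_dep xpredT) //=.
rewrite [X in _ * X](eq_bigr (fun j => l j ^+ n.-1)) => [|j _]; last exact: others.
by rewrite prodrXl -expr2 -exprM mulnC.
Qed.

Lemma maclaurin_offdiag (a : R) :
  (forall i, 0 <= l i) -> 0 <= a -> a ^+ n <= \prod_i l i ->
  (n * n.-1)%:R * a ^+ 2 <= (\sum_i l i) ^+ 2 - \sum_i l i ^+ 2.
Proof.
move=> l0 a0 aP; set N := (n * n.-1)%N; set E := _ - _.
have l2_ge0 p : 0 <= l p.1 * l p.2 by rewrite mulr_ge0.
have E0 : 0 <= E by rewrite /E -sum_offdiag_products sumr_ge0.
have [->|N0] := posnP N; first by rewrite mul0r.
have NR0 : 0 < N%:R :> R by rewrite ltr0n.
have AGM : (\prod_i l i) ^+ (2 * n.-1) <= (E / N%:R) ^+ N.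
  have [+ _] := @leif_AGM R _ offdiag (fun p => l p.1 * l p.2) (fun p _ => l2_ge0 p).
  by rewrite card_offdiag prod_offdiag_products sum_offdiag_products.
rewrite -ler_pdivlMl // mulrC leNgt; apply/negP => Elt.
have : (E / N%:R) ^+ N < (a ^+ 2) ^+ N.
  by rewrite ltrXn2r ?divr_ge0 ?(ltW NR0) // -lt0n.
have -> : (a ^+ 2) ^+ N = (a ^+ n) ^+ (2 * n.-1) by rewrite -!exprM /N mulnCA.
apply/negP; rewrite -leNgt.
by apply: le_trans AGM; apply: lerXn2r; rewrite ?nnegrE ?exprn_ge0 ?prodr_ge0.
Qed.

End OffDiagonalPairs.

Section ScalarEstimates.
Variable R : realFieldType.

Lemma det_defect_correction (s : R) :
  0 < s -> s <= 2^-1 -> 1 <= (1 + 2 * s + 8 * s ^+ 2) * (1 - s) ^+ 2.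
Proof.
move=> s0 s1.
have : 0 <= s ^+ 2 * (5 - 14 * s + 8 * s ^+ 2) by apply: mulr_ge0; nra.
nra.
Qed.

(* An n-th root of the determinant bound: with u = (2s + 8s^2)/n we have
   (1 - u)^n <= (1 - s)^2, since (1 - u)^n (1 + u)^n <= 1 and, by Bernoulli,
   (1 + u)^n >= 1 + 2s + 8s^2. *)
Lemma nth_root_det_bound (n : nat) (s u : R) :
  0 < s -> s <= 2^-1 -> n%:R * u = 2 * s + 8 * s ^+ 2 -> 0 <= u -> 0 < 1 - u ->
  (1 - u) ^+ n <= (1 - s) ^+ 2.
Proof.
move=> s0 s1 nu u0 u1.
have bern : 1 + 2 * s + 8 * s ^+ 2 <= (1 + u) ^+ n by rewrite -addrA -nu bernoulli_ineq.
have prod_le1 : (1 - u) ^+ n * (1 + u) ^+ n <= 1.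
  by rewrite -exprMn exprn_ile1 //; nra.
have X0 : 0 <= (1 - u) ^+ n by rewrite exprn_ge0 // ltW.
have := @det_defect_correction s s0 s1; have := sqr_ge0 (1 - s).
set X := (1 - u) ^+ n in X0 prod_le1 *; set Y := (1 + u) ^+ n in bern prod_le1.
nra.
Qed.

Lemma offdiag_sum_lower (n : nat) (l : 'I_n -> R) (s : R) :
  (0 < n)%N -> 0 < s -> s <= 2^-1 ->
  (forall i, 0 <= l i) -> (1 - s) ^+ 2 <= \prod_i l i ->
  n%:R * (n%:R - 1) - 2 * (n%:R - 1) * (2 * s + 8 * s ^+ 2)
    <= (\sum_i l i) ^+ 2 - \sum_i l i ^+ 2.
Proof.
move=> n0 s0 s1 l0 detl.
have nn1 : 1 <= n%:R :> R by rewrite ler1n.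
have NR : (n * n.-1)%:R = n%:R * (n%:R - 1) :> R by rewrite natrM -subn1 natrB.
set u := (2 * s + 8 * s ^+ 2) / n%:R.
have nu : n%:R * u = 2 * s + 8 * s ^+ 2 by rewrite mulrC divfK // pnatr_eq0 -lt0n.
have u0 : 0 <= u by rewrite divr_ge0 //; nra.
have lower_u : n%:R * (n%:R - 1) - 2 * (n%:R - 1) * (2 * s + 8 * s ^+ 2)
               = n%:R * (n%:R - 1) * (1 - 2 * u) by rewrite -nu; ring.
have nn_ge0 : 0 <= n%:R * (n%:R - 1) :> R by rewrite mulr_ge0 // subr_ge0.
rewrite lower_u; have [u_ge1|u_lt1] := lerP (1 - u) 0.
  have := @maclaurin_offdiag R n l 0 l0 (lexx 0).
  rewrite !expr0n eqn0Ngt n0 /= mulr0 prodr_ge0 // => /(_ isT) E0; nra.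
have := @maclaurin_offdiag R n l (1 - u) l0 (ltW u_lt1).
rewrite (le_trans (@nth_root_det_bound n s u s0 s1 nu u0 u_lt1) detl) NR => /(_ isT).
by apply: le_trans; rewrite ler_wpM2l //; nra.
Qed.

Lemma bernoulli_root (n : nat) (r : R) : 1 <= r -> n%:R * r <= n%:R - 1 + r ^+ n.
Proof.
move=> r1; have := @bernoulli_ineq R (r - 1) n; rewrite subr_ge0 (addrC 1 (r - 1)) subrK.
move=> /(_ r1); lra.
Qed.

Lemma root_ge1 (n : nat) (r : R) : (0 < n)%N -> 0 <= r -> 1 <= r ^+ n -> 1 <= r.
Proof.
move=> n0 r0 rn; rewrite leNgt; apply/negP => r_lt1.
by move: rn; rewrite leNgt ((exprn_ilte1 R).2 n r r0 r_lt1) -lt0n n0.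
Qed.

(* The defect of the trace bound: (1 + s^2)^2 = 1 + trace_defect s. *)
Definition trace_defect (s : R) : R := 2 * s ^+ 2 + s ^+ 4.

Lemma trace_defect_bound (m s : R) : 1 <= m -> 0 < s -> s <= 2^-1 ->
  2 * m * trace_defect s + trace_defect s ^+ 2 <= 6 * m * s ^+ 2.
Proof.
move=> m1 s0 s1.
have q0 : 0 <= s ^+ 2 := sqr_ge0 s.
have q1 : s ^+ 2 <= 4^-1 by nra.
rewrite /trace_defect (_ : s ^+ 4 = (s ^+ 2) ^+ 2); last by rewrite -exprM.
set q := s ^+ 2 in q0 q1 *.
have q2 : q * (2 + q) ^+ 2 <= 3 / 2.
  have : 0 <= (4^-1 - q) * (2 + q) ^+ 2 by apply: mulr_ge0; [lra | exact: sqr_ge0].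
  nra.
have mq : 2 * m * q <= m / 2 by nra.
rewrite (_ : _ + _ = q * (4 * m + (2 * m * q + q * (2 + q) ^+ 2))); last by ring.
rewrite (_ : 6 * m * q = q * (4 * m + 2 * m)); last by ring.
by apply: ler_wpM2l; lra.
Qed.

(* The final polynomial comparison, in terms of m = n - 1. *)
Lemma excess_polynomial_bound (m s : R) : 1 <= m -> 0 < s -> s <= 2^-1 ->
  2 * m * trace_defect s + trace_defect s ^+ 2 + 4 * m * s + 16 * m * s ^+ 2
    <= 4 * m ^+ 2 * s * (1 + (m + 11) / (m + 1) * s).
Proof.
move=> m1 s0 s1.
have := @trace_defect_bound m s m1 s0 s1.
set c := trace_defect s; set t := (m + 11) / (m + 1) => hc.
have mt : 6 <= m * t by rewrite /t mulrA ler_pdivlMr; nra.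
have a : 0 <= m * s * (m - 1) by apply: mulr_ge0; [apply: mulr_ge0|]; lra.
have b : 0 <= m * s ^+ 2 * (m * t - 6).
  by apply: mulr_ge0; [apply: mulr_ge0; [lra | exact: sqr_ge0]|]; lra.
nra.
Qed.

Lemma eigenvalue_excess_bound (n : nat) (s r : R) (l : 'I_n -> R) :
  (2 <= n)%N -> 0 < s -> s <= 2^-1 -> 0 <= r -> r ^+ n = (1 + s ^+ 2) ^+ 2 ->
  (forall i, 0 <= l i) -> (1 - s) ^+ 2 <= \prod_i l i -> \sum_i l i <= n%:R * r ->
  \sum_i l i ^+ 2 - 2 * \sum_i l i + n%:R
    <= 4 * ((n - 1)%:R) ^+ 2 * s * (1 + (n + 10)%:R / n%:R * s).
Proof.
move=> n2 s0 s1 r0 rn l0 detl trl; have n0 := ltnW n2.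
have pairs := @offdiag_sum_lower n l s n0 s0 s1 l0 detl.
set S := \sum_i l i in trl pairs *; set Q := \sum_i l i ^+ 2 in pairs *.
have S0 : 0 <= S by rewrite sumr_ge0.
have cE : (1 + s ^+ 2) ^+ 2 = 1 + trace_defect s by rewrite /trace_defect; ring.
have c0 : 0 <= trace_defect s by rewrite addr_ge0 ?mulr_ge0 ?exprn_ge0 // ltW.
have r1 : 1 <= r by apply: (@root_ge1 n r n0 r0); rewrite rn cE lerDl.
have nr_le := @bernoulli_root n r r1; rewrite rn cE in nr_le.
have nn2 : 2 <= n%:R :> R by rewrite (ler_nat R 2 n).
have nr_ge : n%:R <= n%:R * r by rewrite ler_peMr ?(le_trans _ nn2).
have mE : (n - 1)%:R = n%:R - 1 :> R by rewrite natrB ?(ltnW n2).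
have tE : (n + 10)%:R / n%:R = ((n%:R - 1) + 11) / ((n%:R - 1) + 1) :> R.
  by rewrite natrD !addrA subrK -addrA.
rewrite mE tE; apply: le_trans (@excess_polynomial_bound (n%:R - 1) s _ s0 s1); last lra.
(* With X = n r in [n, n + c], both S^2 - 2S and the pair-sum bound are
   controlled by (X - 1)^2 <= (m + c)^2. *)
set X := n%:R * r in trl nr_le nr_ge; set c := trace_defect s in nr_le c0 *.
have sq_mono : S ^+ 2 - 2 * S <= X ^+ 2 - 2 * X by nra.
have X_sq : (X - 1) ^+ 2 <= (n%:R + c - 1) ^+ 2 by nra.
nra.
Qed.

End ScalarEstimates.

(* Spectral decomposition of a real symmetric matrix, obtained through its
   complexification, which is hermitian. *)
Section RealSpectrum.
Variable R : rcfType.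

Lemma ReJ (z : R[i]) : complex.Re z^* = complex.Re z. Proof. by case: z. Qed.
Lemma ImJ (z : R[i]) : complex.Im z^* = - complex.Im z. Proof. by case: z. Qed.
Lemma ReM (z w : R[i]) :
  complex.Re (z * w) = complex.Re z * complex.Re w - complex.Im z * complex.Im w.
Proof. by case: z; case: w. Qed.
Lemma ImM (z w : R[i]) :
  complex.Im (z * w) = complex.Re z * complex.Im w + complex.Im z * complex.Re w.
Proof. by case: z; case: w. Qed.

Lemma Re_sum (I : Type) (r : seq I) (P : pred I) (F : I -> R[i]) :
  complex.Re (\sum_(i <- r | P i) F i) = \sum_(i <- r | P i) complex.Re (F i).
Proof. by apply: big_morph => [[? ?] []|]. Qed.
Lemma Im_sum (I : Type) (r : seq I) (P : pred I) (F : I -> R[i]) :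
  complex.Im (\sum_(i <- r | P i) F i) = \sum_(i <- r | P i) complex.Im (F i).
Proof. by apply: big_morph => [[? ?] []|]. Qed.

Lemma complexified_form_Re (n : nat) (A : 'M[R]_n) (P : 'M[R[i]]_n) (j : 'I_n) :
  complex.Re ((P *m map_mx (real_complex R) A *m map_mx Num.conj P^T) j j) =
  ((\row_k complex.Re (P j k)) *m A *m (\row_k complex.Re (P j k))^T) 0 0 +
  ((\row_k complex.Im (P j k)) *m A *m (\row_k complex.Im (P j k))^T) 0 0.
Proof.
rewrite !mxE Re_sum -big_split /=; apply: eq_bigr => l _.
rewrite !mxE ReM ReJ ImJ Re_sum Im_sum !mulr_suml -big_split /=.
rewrite -sumrN -big_split /=; apply: eq_bigr => k _.
by rewrite !mxE ReM ImM /=; ring.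
Qed.

Lemma symmetric_psd_spectrum (n : nat) (A : 'M[R]_n) :
  symmetric_mx A -> psd_mx A ->
  exists l : 'I_n -> R, [/\ forall i, 0 <= l i, \tr A = \sum_i l i,
    \det A = \prod_i l i & \tr (A *m A) = \sum_i l i ^+ 2].
Proof.
move=> Asym Apsd; set AC := map_mx (real_complex R) A.
have herm : AC \is hermsymmx.
  rewrite is_hermitianmxE expr0 scale1r; apply/eqP/matrixP => i j.
  by rewrite !mxE conj_Creal ?complex_real // -{1}Asym mxE.
have dreal := hermitian_spectral_diag_real herm.
have /orthomx_spectralP := hermitian_normalmx herm.
set P := spectralmx AC; set d := spectral_diag AC => AE.
have Pu : P \in unitmx := spectral_unit AC.
have Pinv : invmx P = map_mx Num.conj P^T := invmx_unitary (spectral_unitarymx AC).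
have dR j : d 0 j = real_complex R (complex.Re (d 0 j)).
  by rewrite RRe_real //; apply: (mxOverP dreal).
have inj := @complexI R.
exists (fun j => complex.Re (d 0 j)); split.
- move=> j; have DE : diag_mx d = P *m AC *m invmx P.
    by rewrite AE !mulmxA mulmxV // mul1mx -mulmxA mulmxV // mulmx1.
  have := @complexified_form_Re n A P j; rewrite -Pinv -DE mxE eqxx mulr1n => ->.
  by rewrite addr_ge0 // Apsd.
- apply: inj; rewrite -trace_map_mx -/AC AE mxtrace_mulC mulmxA mulmxV // mul1mx.
  by rewrite mxtrace_diag rmorph_sum; apply: eq_bigr => j _; exact: dR.
- apply: inj; rewrite -det_map_mx -/AC AE !det_mulmx det_inv mulrAC mulVr ?mul1r.
    by rewrite det_diag rmorph_prod; apply: eq_bigr => j _; exact: dR.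
  by rewrite -unitmxE.
- apply: inj; rewrite -trace_map_mx map_mxM -/AC AE.
  rewrite -!mulmxA (mulmxA P) mulmxV // mul1mx !mulmxA mxtrace_mulC.
  rewrite !mulmxA mulmxV // mul1mx mulmx_diag mxtrace_diag rmorph_sum.
  by apply: eq_bigr => j _; rewrite mxE rmorphXn /= -dR expr2.
Qed.

End RealSpectrum.

Lemma hs_norm2_sub1 (R : rcfType) (n : nat) (A : 'M[R]_n) :
  symmetric_mx A -> hs_norm2 (A - 1%:M) = \tr (A *m A) - 2 * \tr A + n%:R.
Proof.
move=> Asym; rewrite /hs_norm2.
have -> : (A - 1%:M)^T = A - 1%:M by rewrite linearB /= trmx1 Asym.
rewrite mulmxBl !mulmxBr mulmx1 mul1mx mulmx1 !raddfB /= mxtrace1; ring.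
Qed.

Theorem propositionA1 (R : rcfType) (n : nat) (eta r : R) (A : 'M[R]_n) :
  (2 <= n)%N ->
  0 < eta -> eta <= 4^-1 ->
  0 <= r -> r ^+ n = (1 + eta) ^+ 2 ->
  symmetric_mx A -> psd_mx A ->
  (1 - Num.sqrt eta) ^+ 2 <= \det A ->
  \tr A <= n%:R * r ->
  hs_norm2 (A - 1%:M) <=
    4 * ((n - 1)%:R) ^+ 2 * Num.sqrt eta
      * (1 + (n + 10)%:R / n%:R * Num.sqrt eta).
Proof.
move=> n2 eta0 eta_le r0 rn Asym Apsd detA trA.
have [l [l0 trE detE trA2E]] := @symmetric_psd_spectrum R n A Asym Apsd.
set s := Num.sqrt eta in detA *.
have s0 : 0 < s by rewrite sqrtr_gt0.
have s2 : s ^+ 2 = eta by rewrite sqr_sqrtr // ltW.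
have s_le : s <= 2^-1 by nra.
rewrite hs_norm2_sub1 // trA2E trE.
apply: (@eigenvalue_excess_bound R n s r l) => //; by rewrite ?s2 -?trE -?detE.
Qed.
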